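(* In the setting described in the context, the computable error estimator $\eta^{(2)}$ satisfies $$|J(u)-J(\tilde u)|-|J(u)-J(u_h^{(2)})|\le|\eta^{(2)}|\le|J(u)-J(\tilde u)|+|J(u)-J(u_h^{(2)})|.$$
   Context: Let $U$ and $V$ be real Banach spaces with dual $V^*$. Let $\mathcal{A}:U\to V^*$ be a (nonlinear) operator that is three times continuously Fréchet differentiable, and let $J:U\to\mathbb{R}$ be three times continuously Fréchet differentiable. Notation: $\mathcal{A}(w)(v)$ is the value of $\mathcal{A}(w)\in V^*$ at $v\in V$. For fixed $v$, $\mathcal{A}'(w)(\varphi,v)$, $\mathcal{A}''(w)(\varphi,\psi,v)$ and $\mathcal{A}'''(w)(\varphi,\psi,\chi,v)$ denote the first, second and third Fréchet derivatives of $w\mapsto\mathcal{A}(w)(v)$ at $w$ in the directions $\varphi,\psi,\chi\in U$. Analogously, $J'(w)(\varphi)$ and $J'''(w)(\varphi,\psi,\chi)$ denote derivatives of $J$. Let $u\in U$ satisfy $\mathcal{A}(u)(v)=0$ for all $v\in V$, and let $z\in V$ satisfy $\mathcal{A}'(u)(\varphi,z)=J'(u)(\varphi)$ for all $\varphi\in U$. Let $U_h^{(2)}\subset U$ and $V_h^{(2)}\subset V$ be finite-dimensional subspaces. Let $u_h^{(2)}\in U_h^{(2)}$ satisfy $\mathcal{A}(u_h^{(2)})(v)=0$ for all $v\in V_h^{(2)}$. Let $z_h^{(2)}\in V_h^{(2)}$ satisfy $\mathcal{A}'(u_h^{(2)})(\varphi,z_h^{(2)})=J'(u_h^{(2)})(\varphi)$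 for all $\varphi\in U_h^{(2)}$. Let $\tilde u\in U_h^{(2)}$ and $\tilde z\in V_h^{(2)}$ be arbitrary fixed elements. Define $\rho(\tilde u)(v):=-\mathcal{A}(\tilde u)(v)$ and $\rho^*(\tilde u,\tilde z)(\varphi):=J'(\tilde u)(\varphi)-\mathcal{A}'(\tilde u)(\varphi,\tilde z)$. With $e^{(2)}:=u_h^{(2)}-\tilde u$ and $e^{(2),*}:=z_h^{(2)}-\tilde z$, define $$\mathcal{R}^{(3)(2)}:=\frac12\int_0^1\Big[J'''(\tilde u+se^{(2)})(e^{(2)},e^{(2)},e^{(2)})-\mathcal{A}'''(\tilde u+se^{(2)})(e^{(2)},e^{(2)},e^{(2)},\tilde z+se^{(2),*})-3\mathcal{A}''(\tilde u+se^{(2)})(e^{(2)},e^{(2)},e^{(2),*})\Big]s(s-1)\,ds,$$ and $$\eta^{(2)}:=\tfrac12\rho(\tilde u)(z_h^{(2)}-\tilde z)+\tfrac12\rho^*(\tilde u,\tilde z)(u_h^{(2)}-\tilde u)+\rho(\tilde u)(\tilde z)+\mathcal{R}^{(3)(2)}.$$ *)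

From HB Require Import structures.
From mathcomp Require Import all_boot all_order all_algebra.
From mathcomp Require Import all_classical all_reals all_analysis.
Set Implicit Arguments. Unset Strict Implicit. Unset Printing Implicit Defensive.
Import Order.TTheory GRing.Theory Num.Theory.
Import numFieldNormedType.Exports.
Local Open Scope classical_set_scope.
Local Open Scope ring_scope.

(* Families of (multi)linear forms indexed by a point w : U.  A family is
   F : U -> X -> R, where X is the type of argument tuples and P : X -> R is
   the product of the norms of the arguments, so that "|T x| <= C * P x for
   all x" expresses the operator norm bound ||T|| <= C. *)

Definition frechet_deriv (R : realType) (U : normedModType R) (X : Type)
  (P : X -> R) (F : U -> X -> R) (DF : U -> U -> X -> R) : Prop :=
  forall w : U, forall e : R, 0 < e -> exists d : R, 0 < d /\
    forall h : U, `|h| < d -> forall x : X,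
      `|F (w + h) x - F w x - DF w h x| <= e * `|h| * P x.

Definition op_continuous (R : realType) (U : normedModType R) (X : Type)
  (P : X -> R) (F : U -> X -> R) : Prop :=
  forall w : U, forall e : R, 0 < e -> exists d : R, 0 < d /\
    forall w' : U, `|w' - w| < d -> forall x : X, `|F w' x - F w x| <= e * P x.

Definition op_bounded (R : realType) (U : normedModType R) (X : Type)
  (P : X -> R) (F : U -> X -> R) : Prop :=
  forall w : U, exists C : R, forall x : X, `|F w x| <= C * P x.

Definition linear_form (R : realType) (E : lmodType R) (f : E -> R) : Prop :=
  forall (a : R) (x y : E), f (a *: x + y) = a * f x + f y.

(* Three times continuously Frechet differentiable map G : U -> Y, where Y is a
   space of bounded forms on W (W-arguments weighted by PW, linear in the
   sense of linW).  F0 = G, and Fk w phi1 .. phik x is the k-th Frechet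
   derivative of G at w in the directions phi1..phik, evaluated at x : W. *)
Definition C3_frechet (R : realType) (U : normedModType R) (W : Type)
  (PW : W -> R) (linW : (W -> R) -> Prop)
  (F0 : U -> W -> R) (F1 : U -> U -> W -> R) (F2 : U -> U -> U -> W -> R)
  (F3 : U -> U -> U -> U -> W -> R) : Prop :=
  [/\
      (forall w, linW (F0 w)) /\ op_bounded PW F0,
      [/\ frechet_deriv PW F0 F1,
          (forall w x, linear_form (fun p : U => F1 w p x)),
          (forall w p, linW (F1 w p)) &
          op_bounded (fun y : U * W => `|y.1| * PW y.2) (fun w y => F1 w y.1 y.2)],
      [/\ frechet_deriv (fun y : U * W => `|y.1| * PW y.2)
            (fun w y => F1 w y.1 y.2) (fun w h y => F2 w y.1 h y.2),
          (forall w q x, linear_form (fun p : U => F2 w p q x)),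
          (forall w p x, linear_form (fun q : U => F2 w p q x)),
          (forall w p q, linW (F2 w p q)) &
          op_bounded (fun y : U * U * W => `|y.1.1| * `|y.1.2| * PW y.2)
            (fun w y => F2 w y.1.1 y.1.2 y.2)] &
      [/\ frechet_deriv (fun y : U * U * W => `|y.1.1| * `|y.1.2| * PW y.2)
            (fun w y => F2 w y.1.1 y.1.2 y.2)
            (fun w h y => F3 w y.1.1 y.1.2 h y.2),
          (forall w q r x, linear_form (fun p : U => F3 w p q r x)),
          (forall w p r x, linear_form (fun q : U => F3 w p q r x)),
          (forall w p q x, linear_form (fun r : U => F3 w p q r x)) &
          (forall w p q r, linW (F3 w p q r)) /\
          op_bounded (fun y : U * U * U * W =>
                        `|y.1.1.1| * `|y.1.1.2| * `|y.1.2| * PW y.2)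
            (fun w y => F3 w y.1.1.1 y.1.1.2 y.1.2 y.2) /\
          op_continuous (fun y : U * U * U * W =>
                        `|y.1.1.1| * `|y.1.1.2| * `|y.1.2| * PW y.2)
            (fun w y => F3 w y.1.1.1 y.1.1.2 y.1.2 y.2)]].

(* A : U -> V^* is three times continuously Frechet differentiable;
   A w v is the value of A(w) at v, A1 w phi v = A'(w)(phi,v), etc. *)
Definition C3_operator (R : realType) (U V : normedModType R)
  (A : U -> V -> R) (A1 : U -> U -> V -> R) (A2 : U -> U -> U -> V -> R)
  (A3 : U -> U -> U -> U -> V -> R) : Prop :=
  C3_frechet (fun v : V => `|v|) (@linear_form R V) A A1 A2 A3.

Definition C3_functional (R : realType) (U : normedModType R)
  (J : U -> R) (J1 : U -> U -> R) (J2 : U -> U -> U -> R)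
  (J3 : U -> U -> U -> U -> R) : Prop :=
  C3_frechet (fun _ : unit => 1) (fun _ => True)
    (fun w _ => J w) (fun w p _ => J1 w p) (fun w p q _ => J2 w p q)
    (fun w p q r _ => J3 w p q r).

Definition fin_dim_subspace (R : realType) (E : lmodType R) (S : set E) : Prop :=
  exists (n : nat) (b : 'I_n -> E),
    S = [set x | exists c : 'I_n -> R, x = \sum_(i < n) c i *: b i].

Definition rho (R : realType) (U V : Type) (A : U -> V -> R) (ut : U) (v : V) : R :=
  - A ut v.
Definition rho_star (R : realType) (U V : Type) (J1 : U -> U -> R)
  (A1 : U -> U -> V -> R) (ut : U) (zt : V) (phi : U) : R :=
  J1 ut phi - A1 ut phi zt.

Definition remainder3 (R : realType) (U V : normedModType R)
  (J3 : U -> U -> U -> U -> R) (A2 : U -> U -> U -> V -> R)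
  (A3 : U -> U -> U -> U -> V -> R) (ut uh : U) (zt zh : V) : R :=
  let e := uh - ut in let es := zh - zt in
  2^-1 * \int[@lebesgue_measure R]_(s in `[0%R, 1%R])
    ((J3 (ut + s *: e) e e e
      - A3 (ut + s *: e) e e e (zt + s *: es)
      - 3 * A2 (ut + s *: e) e e es) * (s * (s - 1))).

Definition eta2 (R : realType) (U V : normedModType R)
  (A : U -> V -> R) (A1 : U -> U -> V -> R) (A2 : U -> U -> U -> V -> R)
  (A3 : U -> U -> U -> U -> V -> R) (J1 : U -> U -> R)
  (J3 : U -> U -> U -> U -> R) (ut uh : U) (zt zh : V) : R :=
  2^-1 * rho A ut (zh - zt) + 2^-1 * rho_star J1 A1 ut zt (uh - ut)
  + rho A ut zt + remainder3 J3 A2 A3 ut uh zt zh.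

(** Along the segment from (ut, zt) to (uh, zh), the Lagrangian
    L(u, z) = J(u) - A(u)(z) restricts to a C^3 function l of one variable.
    The trapezoidal rule with exact remainder,
      l(1) - l(0) = (l'(0) + l'(1))/2 + 1/2 int_0^1 l'''(s) s (s - 1) ds,
    evaluates eta^(2) exactly: l(1) = J(uh) and l'(1) = 0 by the Galerkin
    equations, l(0) = J(ut) + rho(ut)(zt) and l'(0) = rho*(uh - ut) + rho(zh - zt),
    so eta^(2) = J(uh) - J(ut).  Both bounds are then the triangle inequality for
    J(u) - J(ut) = (J(u) - J(uh)) + (J(uh) - J(ut)). *)
From HB Require Import structures.
From mathcomp Require Import all_boot all_order all_algebra.
From mathcomp Require Import all_classical all_reals all_analysis.
From mathcomp Require Import ring lra.
Import Order.TTheory GRing.Theory Num.Theory.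
Import numFieldNormedType.Exports.
Local Open Scope classical_set_scope.
Local Open Scope ring_scope.

Set Implicit Arguments.
Unset Strict Implicit.

Section LinearForm.
Variables (R : realType) (E : lmodType R) (f : E -> R).
Hypothesis flin : linear_form f.

Lemma linear_form0 : f 0 = 0.
Proof.
have := flin 1 0 0; rewrite scaler0 add0r mul1r => /esym/eqP.
by rewrite -subr_eq0 addrK => /eqP.
Qed.

Lemma linear_formZ t x : f (t *: x) = t * f x.
Proof. by have := flin t x 0; rewrite !addr0 linear_form0 addr0. Qed.

Lemma linear_formD x y : f (x + y) = f x + f y.
Proof. by have := flin 1 x y; rewrite scale1r mul1r. Qed.

End LinearForm.

Lemma fin_dim_subspaceB (R : realType) (E : lmodType R) (S : set E) x y :
  fin_dim_subspace S -> S x -> S y -> S (x - y).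
Proof.
move=> [n [b ->]] /= [cx ->] [cy ->]; exists (fun i => cx i - cy i).
by rewrite -sumrB; apply: eq_bigr => i _; rewrite scalerBl.
Qed.

Lemma continuous_line (R : realType) (U : normedModType R) (w0 e : U) :
  continuous (fun t : R => w0 + t *: e).
Proof.
move=> s; apply: (@continuousD _ _ _ (cst w0) (fun t : R => t *: e)).
  exact: cst_continuous.
exact: continuousZr_tmp.
Qed.

Lemma is_derive_continuous (R : realType) (f : R -> R) (s df : R) :
  is_derive s (1 : R) f df -> {for s, continuous f}.
Proof.
by move=> fs; apply/differentiable_continuous; rewrite -derivable1_diffP; exact: ex_derive.
Qed.

Section FrechetAlongLine.
Variables (R : realType) (U : normedModType R) (X : Type) (P : X -> R).

Lemma is_derive_along_line (F : U -> X -> R) (DF : U -> U -> X -> R) :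
  frechet_deriv P F DF -> (forall w x t h, DF w (t *: h) x = t * DF w h x) ->
  forall (w0 e : U) (x : X) (s : R),
    is_derive s (1 : R) (fun t : R => F (w0 + t *: e) x) (DF (w0 + s *: e) e x).
Proof.
move=> dF DFZ w0 e x s; set D := DF (w0 + s *: e) e x.
suff quot : (fun h : R => h^-1 *: (((fun t => F (w0 + t *: e) x) \o shift s) (h *: 1)
                - F (w0 + s *: e) x)) @ 0^' --> D.
  by apply: DeriveDef; [exact: cvgP quot | exact: cvg_lim quot].
apply/cvgrPdist_le => eps eps0.
have K0 : 0 < `|e| * `|P x| + 1 by rewrite ltr_pwDr // mulr_ge0.
pose c := eps / (`|e| * `|P x| + 1).
have c0 : 0 < c by rewrite divr_gt0.
have [d [d0 Hd]] := dF (w0 + s *: e) c c0.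
have e1 : 0 < `|e| + 1 by rewrite ltr_pwDr.
near=> h.
have h0 : h != 0 by near: h; exact: nbhs_dnbhs_neq.
have he : `|h *: e| < d.
  have hd : `|h| < d / (`|e| + 1) by near: h; apply: dnbhs0_lt; rewrite divr_gt0.
  rewrite normrZ (le_lt_trans (y := `|h| * (`|e| + 1))) ?ler_wpM2l ?lerDl //.
  by rewrite -ltr_pdivlMr.
have := Hd _ he x; rewrite DFZ normrZ /= [_%:A]mulr1 (addrC h s) scalerDl addrA -/D.
set Q := F _ x - F _ x => HQ.
have -> : D - h^-1 *: Q = - (h^-1 * (Q - h * D)) by rewrite -[_ *: _]/(_ * _); field.
rewrite normrN normrM normfV ler_pdivrMl ?normr_gt0 //; apply: (le_trans HQ).
have ceps : c * (`|e| * `|P x| + 1) = eps by rewrite divfK // gt_eqF.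
have Px : P x <= `|P x| by rewrite real_ler_norm // num_real.
have : 0 <= c * `|h| * (`|e| * (`|P x| - P x) + 1).
  by rewrite mulr_ge0 ?addr_ge0 ?mulr_ge0 ?subr_ge0 // ltW.
rewrite -ceps; nra.
Unshelve. all: by end_near.
Qed.

Lemma op_continuous_at (F : U -> X -> R) :
  op_continuous P F -> forall x, continuous (fun w => F w x).
Proof.
move=> cF x w; apply/cvgrPdist_le => eps eps0.
have K0 : 0 < `|P x| + 1 by rewrite ltr_pwDr.
pose c := eps / (`|P x| + 1).
have c0 : 0 < c by rewrite divr_gt0.
have [d [d0 Hd]] := cF w c c0.
near=> w'.
have ww' : `|w' - w| < d by near: w'; exact: (@cvgr_distC_lt _ _ _ _ _ id w).
rewrite distrC; apply: (le_trans (Hd _ ww' x)).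
have ceps : c * (`|P x| + 1) = eps by rewrite divfK // gt_eqF.
have Px : P x <= `|P x| by rewrite real_ler_norm // num_real.
rewrite -ceps; nra.
Unshelve. all: by end_near.
Qed.

End FrechetAlongLine.

Arguments op_continuous_at {R U X P F} cF x.

Section C3FrechetAlongLine.
Variables (R : realType) (U : normedModType R) (W : Type) (PW : W -> R).
Variables (linW : (W -> R) -> Prop) (F0 : U -> W -> R) (F1 : U -> U -> W -> R).
Variables (F2 : U -> U -> U -> W -> R) (F3 : U -> U -> U -> U -> W -> R).
Hypothesis hF : C3_frechet PW linW F0 F1 F2 F3.
Variables (w0 e : U) (x : W).
Let w (t : R) := w0 + t *: e.

Lemma C3_frechet_derive0 s :
  is_derive s (1 : R) (fun t => F0 (w t) x) (F1 (w s) e x).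
Proof.
case: hF => _ [dF1 F1lin _ _] _ _.
exact: (is_derive_along_line dF1 (fun v y => linear_formZ (F1lin v y))).
Qed.

Lemma C3_frechet_derive1 s :
  is_derive s (1 : R) (fun t => F1 (w t) e x) (F2 (w s) e e x).
Proof.
case: hF => _ _ [dF2 _ F2lin _ _] _.
exact: (is_derive_along_line dF2 (fun v y => linear_formZ (F2lin v y.1 y.2)) w0 e (e, x)).
Qed.

Lemma C3_frechet_derive2 s :
  is_derive s (1 : R) (fun t => F2 (w t) e e x) (F3 (w s) e e e x).
Proof.
case: hF => _ _ _ [dF3 _ _ F3lin _].
exact: (is_derive_along_line dF3
  (fun v y => linear_formZ (F3lin v y.1.1 y.1.2 y.2)) w0 e (e, e, x)).
Qed.

Lemma C3_frechet_continuous3 : continuous (fun t => F3 (w t) e e e x).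
Proof.
case: hF => _ _ _ [_ _ _ _ [_ [_ cF3]]] s.
apply: (@continuous_comp _ _ _ w (fun v => F3 v e e e x)); first exact: continuous_line.
exact: (op_continuous_at cF3 (e, e, e, x)).
Qed.

End C3FrechetAlongLine.

Arguments C3_frechet_continuous3 {R U W PW linW F0 F1 F2 F3} hF w0 e x.

Lemma trapezoid_rule_remainder (R : realType) (g g1 g2 g3 : R -> R) :
  (forall s, is_derive s (1 : R) g (g1 s)) ->
  (forall s, is_derive s (1 : R) g1 (g2 s)) ->
  (forall s, is_derive s (1 : R) g2 (g3 s)) -> continuous g3 ->
  \int[lebesgue_measure]_(s in `[0, 1]) (g3 s * (s * (s - 1)))
    = 2 * (g 1 - g 0) - (g1 0 + g1 1).
Proof.
move=> dg dg1 dg2 cg3.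
pose p t : R := t * (t - 1).
pose q t : R := 2 * t - 1.
have dp t : is_derive t (1 : R) p (q t).
  rewrite (_ : p = id * (id - cst 1)); last exact/funext.
  apply: is_derive_eq; rewrite /q [(_ - _)%:A]mulr1 -[t *: _]/(t * _) /=; ring.
have dq t : is_derive t (1 : R) q 2.
  rewrite (_ : q = 2 \*: id - cst 1); last exact/funext.
  by apply: is_derive_eq; rewrite -[2 *: _]/(2 * _) mulr1 subr0.
(* G' = g3 p because p' = q and q' = 2. *)
pose G t := g2 t * p t - g1 t * q t + 2 * g t.
have dG t : is_derive t (1 : R) G (g3 t * p t).
  rewrite (_ : G = g2 * p - g1 * q + 2 \*: g); last exact/funext.
  apply: is_derive_eq; rewrite -![_ *: _]/(_ * _) /=; ring.
have cg3p : continuous (fun s => g3 s * p s).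
  by move=> s; apply: continuousM; [exact: cg3 | exact: is_derive_continuous (dp s)].
rewrite /Rintegral (continuous_FTC2 ltr01 (F := G)) /=.
- by rewrite /G /p /q; ring.
- exact: continuous_subspaceT.
- split.
  + by move=> x _; case: (dG x).
  + by apply: cvg_at_right_filter; exact: is_derive_continuous (dG 0).
  + by apply: cvg_at_left_filter; exact: is_derive_continuous (dG 1).
- by move=> x _; rewrite derive1E derive_val.
Qed.

Section SubPairing.
Variables (R : realType) (a b c : R -> R).

Lemma is_derive_sub_pairing (da db dc s : R) :
  is_derive s (1 : R) a da -> is_derive s (1 : R) b db -> is_derive s (1 : R) c dc ->
  is_derive s (1 : R) (fun t => a t - (b t + t * c t)) (da - (db + (c s + s * dc))).
Proof.
move=> da_s db_s dc_s.
rewrite (_ : (fun t => _) = a - (b + id * c)); last exact/funext.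
by apply: is_derive_eq; rewrite [(c s)%:A]mulr1 -[s *: dc]/(s * dc) (addrC (s * dc)).
Qed.

Lemma continuous_sub_pairing :
  continuous a -> continuous b -> continuous c ->
  continuous (fun t => a t - (b t + t * c t)).
Proof.
move=> ca cb cc s.
rewrite (_ : (fun t => _) = a - (b + id * c)); last exact/funext.
apply: continuousB; first exact: ca.
apply: continuousD; first exact: cb.
by apply: continuousM; [exact: cvg_id | exact: cc].
Qed.

End SubPairing.

Section ErrorRepresentation.
Variables (R : realType) (U V : normedModType R).
Variables (A : U -> V -> R) (A1 : U -> U -> V -> R).
Variables (A2 : U -> U -> U -> V -> R) (A3 : U -> U -> U -> U -> V -> R).
Variables (J : U -> R) (J1 : U -> U -> R).
Variables (J2 : U -> U -> U -> R) (J3 : U -> U -> U -> U -> R).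
Hypotheses (hA : C3_operator A A1 A2 A3) (hJ : C3_functional J J1 J2 J3).
Variables (ut uh : U) (zt zh : V).
Let e := uh - ut.
Let es := zh - zt.
Let w (t : R) := ut + t *: e.

(* l0 t is the Lagrangian J (w t) - A (w t) (zt + t es), expanded by linearity
   of A (w t); l1, l2, l3 are its derivatives. *)
Let l0 t := J (w t) - (A (w t) zt + t * A (w t) es).
Let l1 t := J1 (w t) e - A (w t) es - (A1 (w t) e zt + t * A1 (w t) e es).
Let l2 t := J2 (w t) e e - 2 * A1 (w t) e es
            - (A2 (w t) e e zt + t * A2 (w t) e e es).
Let l3 t := J3 (w t) e e e - 3 * A2 (w t) e e es
            - (A3 (w t) e e e zt + t * A3 (w t) e e e es).

Let dJ0 := C3_frechet_derive0 hJ ut e tt.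
Let dJ1 := C3_frechet_derive1 hJ ut e tt.
Let dJ2 := C3_frechet_derive2 hJ ut e tt.
Let dA0 := C3_frechet_derive0 hA ut e.
Let dA1 := C3_frechet_derive1 hA ut e.
Let dA2 := C3_frechet_derive2 hA ut e.

Lemma is_derive_l0 s : is_derive s (1 : R) l0 (l1 s).
Proof.
apply: is_derive_eq; first exact: (is_derive_sub_pairing (dJ0 s) (dA0 zt s) (dA0 es s)).
by rewrite /l1; ring.
Qed.

Lemma is_derive_l1 s : is_derive s (1 : R) l1 (l2 s).
Proof.
apply: is_derive_eq.
  apply: (is_derive_sub_pairing _ (dA1 zt s) (dA1 es s)).
  exact: (is_deriveB (dJ1 s) (dA0 es s)).
by rewrite /l2; ring.
Qed.

Lemma is_derive_l2 s : is_derive s (1 : R) l2 (l3 s).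
Proof.
apply: is_derive_eq.
  apply: (is_derive_sub_pairing _ (dA2 zt s) (dA2 es s)).
  exact: (is_deriveB (dJ2 s) (is_deriveZ 2 (dA1 es s))).
by rewrite /l3 -[2 *: _]/(2 * _); ring.
Qed.

Lemma continuous_l3 : continuous l3.
Proof.
have cA3 := C3_frechet_continuous3 hA ut e.
apply: continuous_sub_pairing; [move=> s | exact: cA3 | exact: cA3].
rewrite (_ : (fun t => _) = (fun t => J3 (w t) e e e) - 3 \*: (fun t => A2 (w t) e e es));
  last exact/funext.
apply: continuousB; first exact: (C3_frechet_continuous3 hJ ut e tt).
exact: continuousZl_tmp (is_derive_continuous (dA2 es s)).
Qed.

Lemma remainder3_trapezoid :
  remainder3 J3 A2 A3 ut uh zt zh = 2^-1 * (2 * (l0 1 - l0 0) - (l1 0 + l1 1)).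
Proof.
rewrite -(trapezoid_rule_remainder is_derive_l0 is_derive_l1 is_derive_l2 continuous_l3).
congr (_ * _); apply: eq_Rintegral => s _.
case: hA => _ _ _ [_ _ _ _ [A3lin _]].
by rewrite /l3 (linear_formD (A3lin _ _ _ _)) (linear_formZ (A3lin _ _ _ _)); ring.
Qed.

Hypotheses (Auh_zt : A uh zt = 0) (Auh_es : A uh es = 0).
Hypothesis (A1uh_zh : A1 uh e zh = J1 uh e).

Lemma eta2_eq_goal_difference : eta2 A A1 A2 A3 J1 J3 ut uh zt zh = J uh - J ut.
Proof.
have w0 : w 0 = ut by rewrite /w scale0r addr0.
have w1 : w 1 = uh by rewrite /w scale1r /e addrC subrK.
have A1uh_split : A1 uh e zt + 1 * A1 uh e es = J1 uh e.
  case: hA => _ [_ _ A1lin _] _ _.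
  by rewrite mul1r -(linear_formD (A1lin _ _)) /es addrC subrK.
rewrite /eta2 remainder3_trapezoid /rho /rho_star -/e -/es /l0 /l1 w0 w1.
by rewrite A1uh_split Auh_zt Auh_es; field.
Qed.

End ErrorRepresentation.

Theorem mainTheorem6 (R : realType)
  (U V : completeNormedModType R)
  (A : U -> V -> R) (A1 : U -> U -> V -> R) (A2 : U -> U -> U -> V -> R)
  (A3 : U -> U -> U -> U -> V -> R)
  (J : U -> R) (J1 : U -> U -> R) (J2 : U -> U -> U -> R)
  (J3 : U -> U -> U -> U -> R)
  (hA : C3_operator A A1 A2 A3) (hJ : C3_functional J J1 J2 J3)
  (u : U) (z : V)
  (hu : forall v : V, A u v = 0)
  (hz : forall phi : U, A1 u phi z = J1 u phi)
  (Uh : set U) (Vh : set V)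
  (hUh : fin_dim_subspace Uh) (hVh : fin_dim_subspace Vh)
  (uh : U) (zh : V) (uh_in : Uh uh) (zh_in : Vh zh)
  (huh : forall v : V, Vh v -> A uh v = 0)
  (hzh : forall phi : U, Uh phi -> A1 uh phi zh = J1 uh phi)
  (ut : U) (zt : V) (ut_in : Uh ut) (zt_in : Vh zt) :
  `|J u - J ut| - `|J u - J uh|
    <= `|eta2 A A1 A2 A3 J1 J3 ut uh zt zh|
    <= `|J u - J ut| + `|J u - J uh|.
Proof.
have Auh_es := huh _ (fin_dim_subspaceB hVh zh_in zt_in).
have A1uh_zh := hzh _ (fin_dim_subspaceB hUh uh_in ut_in).
rewrite (eta2_eq_goal_difference hA hJ (huh _ zt_in) Auh_es A1uh_zh).
have -> : J uh - J ut = (J u - J ut) - (J u - J uh) by ring.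
by rewrite lerB_dist ler_normB.
Qed.
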